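(* Let $X$ be a topological space, $\mathcal{D}$ the set of dense open subsets of $X$, and $\mathcal{D}'$ an admissible set of domains on $X$ with $\mathcal{D}'\subseteq\mathcal{D}$. Then the inclusion $\bigcup_{A\in\mathcal{D}'}\mathscr{C}(A)\to\bigcup_{A\in\mathcal{D}}\mathscr{C}(A)$, $f\mapsto f$, descends to a well-defined positive ring morphism $\check\iota\colon\mathscr{C}_\approx(\mathcal{D}')\to\mathscr{C}_\approx(\mathcal{D})=\mathscr{C}_{\mathrm{a.e.}}(X)$, and $\check\iota$ is an order embedding.
   Context: An admissible set of domains on $X$ is a set $\mathcal{E}$ of open subsets of $X$ with $X\in\mathcal{E}$ and $A\cap B\in\mathcal{E}$ for all $A,B\in\mathcal{E}$ (the dense open subsets form one). For such $\mathcal{E}$: on $\bigcup_{A\in\mathcal{E}}\mathscr{C}(A)$ ($\mathscr{C}(A)$ = continuous real functions on $A$) define $f+g$, $fg$ pointwise on $\operatorname{dom}f\cap\operatorname{dom}g$; $f\approx g$ iff $f|_A=g|_A$ for some $A\in\mathcal{E}$, $A\subseteq\operatorname{dom}f\cap\operatorname{dom}g$; $\mathscr{C}_\approx(\mathcal{E})$ is the quotient commutative ring, partially ordered by $[f]\le[g]$ iff $f|_A\le g|_A$ pointwise for some $A\in\mathcal{E}$, $A\subseteq\operatorname{dom}f\cap\operatorname{dom}g$. $\mathscr{C}_{\mathrm{a.e.}}(X)=\mathscr{C}_\approx(\mathcal{D})$ for $\mathcal{D}$ the dense open subsets. A ring morphism $\Phi\colon R\to S$ of partially ordered rings is positive if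 $\Phi(R^+)\subseteq S^+$, an order embedding if in addition $\Phi^{-1}(S^+)\subseteq R^+$. *)

From HB Require Import structures.
From mathcomp Require Import all_boot all_order all_algebra.
From mathcomp Require Import all_classical all_reals all_analysis.
Set Implicit Arguments. Unset Strict Implicit. Unset Printing Implicit Defensive.
Import Order.TTheory GRing.Theory Num.Theory numFieldNormedType.Exports.
Local Open Scope classical_set_scope.
Local Open Scope ring_scope.

(* A partial real function on X: a domain together with a value map.
   Values outside [dom_pdom] are irrelevant (all notions below only look at the
   function on subsets of its domain). *)
Record dom_pfun (X : Type) (R : Type) := dom_PFun { dom_pdom : set X ; dom_pval : X -> R }.

Section Defs.
Context {X : topologicalType} {R : realType}.

Definition dom_admissible (E : set (set X)) : Prop :=
  (forall A, E A -> open A) /\ E setT /\ (forall A B, E A -> E B -> E (A `&` B)).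

Definition dom_dense_open : set (set X) := [set A | open A /\ dense A].

Definition dom_inC (E : set (set X)) (f : dom_pfun X R) : Prop :=
  E (dom_pdom f) /\ {within dom_pdom f, continuous (dom_pval f : X -> R)}.

Definition dom_padd (f g : dom_pfun X R) : dom_pfun X R :=
  dom_PFun (dom_pdom f `&` dom_pdom g) (fun x => dom_pval f x + dom_pval g x).
Definition dom_pmul (f g : dom_pfun X R) : dom_pfun X R :=
  dom_PFun (dom_pdom f `&` dom_pdom g) (fun x => dom_pval f x * dom_pval g x).
Definition dom_pzero : dom_pfun X R := dom_PFun setT (fun _ => 0).
Definition dom_pone : dom_pfun X R := dom_PFun setT (fun _ => 1).

Definition dom_approx (E : set (set X)) (f g : dom_pfun X R) : Prop :=
  exists A, E A /\ A `<=` dom_pdom f `&` dom_pdom g /\ forall x, A x -> dom_pval f x = dom_pval g x.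

Definition dom_ple (E : set (set X)) (f g : dom_pfun X R) : Prop :=
  exists A, E A /\ A `<=` dom_pdom f `&` dom_pdom g /\ forall x, A x -> dom_pval f x <= dom_pval g x.

End Defs.

From mathcomp Require Import all_boot all_order all_algebra.
From mathcomp Require Import all_classical all_reals all_analysis.
Import Order.TTheory GRing.Theory Num.Theory numFieldNormedType.Exports.
Local Open Scope classical_set_scope.
Local Open Scope ring_scope.

(* Enlarging the set of domains can only make more functions equal or
   comparable, so the inclusion descends to the quotients and is a positive
   ring morphism.  It reflects positivity because a function continuous on an
   open set and nonnegative on a dense set is nonnegative on the whole open
   set: where it is negative is relatively open in an open set, hence open,
   and so would meet the dense set. *)

Section ContinuousDense.
Context {X : topologicalType} {R : realType}.

Lemma continuous_ge0_dense (A B : set X) (f : X -> R) :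
  open A -> dense B -> {within A, continuous f} ->
  (forall x, B x -> 0 <= f x) -> forall x, A x -> 0 <= f x.
Proof.
move=> oA dB cf f_ge0 x Ax; rewrite leNgt; apply/negP => fx_lt0.
have Aox : A° x by move: oA => /interior_id ->.
have neg_near : nbhs x [set y | f y < 0].
  by rewrite (nbhs_subspace_interior Aox); exact: cvgr_lt (cf x) _ fx_lt0.
move: neg_near; rewrite nbhsE => -[U [oU Ux] Uneg].
have [y [Uy By]] := dB U (ex_intro _ x Ux) oU.
by move: (f_ge0 y By); rewrite leNgt Uneg.
Qed.

End ContinuousDense.

Section DomainInclusion.
Context {X : topologicalType} {R : realType}.
Implicit Types (E F : set (set X)) (f g : dom_pfun X R).

Lemma dom_inC_sub E F f : E `<=` F -> dom_inC E f -> dom_inC F f.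
Proof. by move=> EF [Ef cf]; split => //; exact: EF. Qed.

Lemma dom_approx_sub E F f g : E `<=` F -> dom_approx E f g -> dom_approx F f g.
Proof. by move=> EF [A [EA fgA]]; exists A; split => //; exact: EF. Qed.

Lemma dom_ple_sub E F f g : E `<=` F -> dom_ple E f g -> dom_ple F f g.
Proof. by move=> EF [A [EA fgA]]; exists A; split => //; exact: EF. Qed.

Lemma dom_approx_refl E f : E (dom_pdom f) -> dom_approx E f f.
Proof. by move=> Ef; exists (dom_pdom f); split => // x. Qed.

Lemma dom_admissibleI E f g : dom_admissible E ->
  dom_inC E f -> dom_inC E g -> E (dom_pdom f `&` dom_pdom g).
Proof. by move=> [_ [_ EI]] [Ef _] [Eg _]; exact: EI. Qed.

Lemma dom_ple0_dense E f : (forall A, E A -> open A) -> dom_inC E f ->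
  dom_ple dom_dense_open dom_pzero f -> dom_ple E dom_pzero f.
Proof.
move=> Eopen [Ef cf] [B [[_ dB] [_ f_ge0]]].
exists (dom_pdom f); split=> //; split=> [x fx //|].
exact: continuous_ge0_dense (Eopen _ Ef) dB cf f_ge0.
Qed.

End DomainInclusion.

Theorem proposition17 (X : topologicalType) (R : realType) (D' : set (set X)) :
  dom_admissible D' -> D' `<=` dom_dense_open ->
  [/\ (forall f : dom_pfun X R, dom_inC D' f -> dom_inC dom_dense_open f),
      (forall f g : dom_pfun X R, dom_inC D' f -> dom_inC D' g ->
          dom_approx D' f g -> dom_approx dom_dense_open f g),
      [/\ (forall f g : dom_pfun X R, dom_inC D' f -> dom_inC D' g ->
             dom_approx dom_dense_open (dom_padd f g) (dom_padd f g)),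
          (forall f g : dom_pfun X R, dom_inC D' f -> dom_inC D' g ->
             dom_approx dom_dense_open (dom_pmul f g) (dom_pmul f g)) &
          dom_approx dom_dense_open (@dom_pone X R) (@dom_pone X R)],
      (forall f : dom_pfun X R, dom_inC D' f -> dom_ple D' dom_pzero f -> dom_ple dom_dense_open dom_pzero f) &
      (forall f : dom_pfun X R, dom_inC D' f -> dom_ple dom_dense_open dom_pzero f -> dom_ple D' dom_pzero f)].
Proof.
move=> D'adm D'D; have [D'open [D'T _]] := D'adm.
split=> [f|f g _ _||f _|f]; first exact: dom_inC_sub.
- exact: dom_approx_sub.
- split=> [f g Cf Cg|f g Cf Cg|]; apply: dom_approx_refl; apply: D'D;
    by [exact: dom_admissibleI D'adm Cf Cg|].
- exact: dom_ple_sub.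
- exact: dom_ple0_dense.
Qed.
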